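(* Let $X_0=(y_0,U_0,H_0,r_0,V_0)\in\mathcal{F}_i^\alpha$ and let $X(t)$ be the $\alpha$-dissipative solution with initial data $X_0$. Let $c>0$ be such that $c\le y_{0,\xi}(\xi)+H_{0,\xi}(\xi)$ for a.e. $\xi\in\mathbb{R}$. Then for every $t\ge0$, $$\mathrm{m}\big(\{\xi\in\mathbb{R}:\tau(\xi)\le t\}\big)\le\frac{1+\frac14t^2}{c}\|H_0\|_\infty,$$ where $\mathrm{m}$ denotes Lebesgue measure.
   Context: Fix $\alpha\in W^{1,\infty}(\mathbb{R})$ with either $0\le\alpha(x)<1$ for all $x\in\mathbb{R}$, or $\alpha(x)=1$ for all $x\in\mathbb{R}$. $E_1=\{f\in L^\infty(\mathbb{R}): f'\in L^2(\mathbb{R}),\ \lim_{x\to-\infty}f(x)=0\}$, $E_2=\{f\in L^\infty(\mathbb{R}): f'\in L^2(\mathbb{R})\}$, normed by $\|f\|_\infty+\|f'\|_2$; $B=E_2\times E_2\times E_1\times L^2(\mathbb{R})\times E_1$. $\mathcal{F}^\alpha$ is the set of $X=(y,U,H,r,V)$ with $(y-\mathrm{id},U,H,r,V)\in B$ such that: (i) $y-\mathrm{id},U,H,V\in W^{1,\infty}$, $r\in L^\infty$; (ii) $y_\xi\ge0$, $H_\xi\ge0$ and $y_\xi+H_\xi>c'$ a.e. for some constant $c'>0$; (iii) $y_\xi V_\xi=U_\xi^2+r^2$ a.e.; (iv) $0\le V_\xi\le H_\xi$ a.e.; (v) if $0\le\alpha<1$, there is $\kappa:\mathbb{R}\to(0,1]$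 with $V_\xi=\kappa(y)H_\xi$ a.e. and $\kappa(y(\xi))=1$ whenever $U_\xi(\xi)<0$ or $r(\xi)\ne0$; (vi) if $\alpha\equiv1$, a.e. $y_\xi=0\Rightarrow V_\xi=0$ and $y_\xi>0\Rightarrow V_\xi=H_\xi$. $\mathcal{F}_i^\alpha=\{X\in\mathcal{F}^\alpha:V=H\}$. For $X_0\in\mathcal{F}_i^\alpha$ the breaking time is $\tau(\xi)=0$ if $y_{0,\xi}(\xi)=0$, $\tau(\xi)=-2U_{0,\xi}(\xi)/H_{0,\xi}(\xi)$ if $r_0(\xi)=0$ and $U_{0,\xi}(\xi)<0$, and $\tau(\xi)=\infty$ otherwise. The $\alpha$-dissipative solution with data $X_0$ is the unique $X(t)=(y,U,H,r,V)(t)$, $X(0)=X_0$, solving $y_t=U$, $U_t=\frac12V-\frac14\lim_{\xi\to\infty}V$, $H_t=0$, $r_t=0$, with $V(\xi,t)=\int_{-\infty}^\xi H_{0,\xi}(\eta)(1-\mathbf{1}_{\{t\ge\tau(\eta)\}}\alpha(y(\eta,\tau(\eta))))d\eta$. *)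

From HB Require Import structures.
From mathcomp Require Import all_boot all_order all_algebra.
From mathcomp Require Import all_classical all_reals all_analysis.
Set Implicit Arguments. Unset Strict Implicit. Unset Printing Implicit Defensive.
Import Order.TTheory GRing.Theory Num.Theory.
Import numFieldNormedType.Exports.
Local Open Scope classical_set_scope.
Local Open Scope ring_scope.

Section Spaces.
Variable R : realType.
Local Notation mu := (@lebesgue_measure R).

Definition Linf (g : R -> R) : Prop :=
  measurable_fun setT g /\ exists M : R, {ae mu, forall x, `|g x| <= M}.

Definition L2 (g : R -> R) : Prop :=
  measurable_fun setT g /\ (\int[mu]_x ((g x) ^+ 2)%:E < +oo)%E.

(* g is a weak (a.e.) derivative of f: f is locally absolutely continuous
   and f(b) - f(a) = int_a^b g for all a <= b *)
Definition weak_deriv (f g : R -> R) : Prop :=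
  forall a b : R, a <= b ->
    mu.-integrable `[a, b] (EFin \o g) /\
    ((f b - f a)%:E = \int[mu]_(x in `[a, b]) (g x)%:E)%E.

Definition W1inf (f g : R -> R) : Prop :=
  Linf f /\ Linf g /\ weak_deriv f g.

Definition E2 (f g : R -> R) : Prop :=
  Linf f /\ weak_deriv f g /\ L2 g.

Definition E1 (f g : R -> R) : Prop :=
  E2 f g /\ f x @[x --> -oo] --> (0 : R).

(* X = (y, U, H, r, V) in F^alpha; yx, Ux, Hx, Vx are (representatives of)
   the a.e. derivatives y_xi, U_xi, H_xi, V_xi. *)
Definition in_F (alpha : R -> R) (y U H r V yx Ux Hx Vx : R -> R) : Prop :=
  [/\ E2 (fun x => y x - x) (fun x => yx x - 1), E2 U Ux, E1 H Hx, L2 r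
    & E1 V Vx] /\
  [/\ W1inf (fun x => y x - x) (fun x => yx x - 1), W1inf U Ux, W1inf H Hx,
      W1inf V Vx & Linf r] /\
  [/\ {ae mu, forall x, 0 <= yx x}, {ae mu, forall x, 0 <= Hx x}
    & exists c' : R, 0 < c' /\ {ae mu, forall x, c' < yx x + Hx x}] /\
  {ae mu, forall x, yx x * Vx x = Ux x ^+ 2 + r x ^+ 2} /\
  {ae mu, forall x, 0 <= Vx x <= Hx x} /\
  ((forall x, 0 <= alpha x < 1) ->
     exists kappa : R -> R, (forall z, 0 < kappa z <= 1) /\
       {ae mu, forall x, Vx x = kappa (y x) * Hx x} /\
       {ae mu, forall x, (Ux x < 0 \/ r x != 0) -> kappa (y x) = 1}) /\
  ((forall x, alpha x = 1) ->
     {ae mu, forall x, yx x = 0 -> Vx x = 0} /\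
     {ae mu, forall x, 0 < yx x -> Vx x = Hx x}).

Definition in_Fi (alpha : R -> R) (y U H r yx Ux Hx : R -> R) : Prop :=
  in_F alpha y U H r H yx Ux Hx Hx.

Definition tau (yx Ux Hx r : R -> R) (xi : R) : \bar R :=
  if yx xi == 0 then 0%E
  else if (r xi == 0) && (Ux xi < 0) then (- 2 * Ux xi / Hx xi)%:E
  else +oo%E.

End Spaces.

From HB Require Import structures.
From mathcomp Require Import all_boot all_order all_algebra.
From mathcomp Require Import all_classical all_reals all_analysis.
From mathcomp Require Import lra measurable_realfun ess_sup_inf.
Import Order.TTheory GRing.Theory Num.Theory.
Import numFieldNormedType.Exports.
Local Open Scope classical_set_scope.
Local Open Scope ring_scope.

(* Where tau <= t, either y_xi = 0, or r = 0, U_xi < 0 and -2 U_xi <= t H_xi;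
   as y_xi H_xi = U_xi^2 + r^2, the latter gives 4 y_xi <= t^2 H_xi.  Hence
   c <= y_xi + H_xi <= (1 + t^2/4) H_xi a.e. on {tau <= t}, and integrating
   H_xi over {tau <= t} /\ [-n, n] bounds its measure by
   (1 + t^2/4)/c * (H(n) - H(-n)).  Since H is nondecreasing with
   H(-oo) = 0, this is at most (1 + t^2/4)/c * ||H||_oo; let n -> oo. *)

Lemma tau_le_bound (R : realType) (yx Ux Hx r : R -> R) (xi t : R) :
  0 <= yx xi -> 0 <= Hx xi -> yx xi * Hx xi = Ux xi ^+ 2 + r xi ^+ 2 ->
  (tau yx Ux Hx r xi <= t%:E)%E ->
  yx xi + Hx xi <= (1 + t ^+ 2 / 4) * Hx xi.
Proof.
rewrite /tau; set y := yx xi; set u := Ux xi; set h := Hx xi.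
move=> y0 h0 yh; case: eqP => [-> _ | _]; first nra.
case: ifP => [/andP[/eqP r0 u0] | _]; last by rewrite leye_eq.
rewrite r0 expr0n addr0 in yh.
have hpos : 0 < h.
  rewrite lt_def h0 andbT; apply: contraTneq u0 => h00.
  move: yh; rewrite h00 mulr0 => /esym/eqP; rewrite sqrf_eq0 => /eqP u00.
  by rewrite u00 ltxx.
rewrite lee_fin ler_pdivrMr // => tau_t.
have : 4 * (y * h) <= t ^+ 2 * h ^+ 2 by rewrite yh; nra.
nra.
Qed.

Lemma measurable_funV d (T : measurableType d) (R : realType) (D : set T)
    (f : T -> R) : measurable D -> measurable_fun D f ->
  measurable_fun D (fun x => (f x)^-1).
Proof.
move=> mD mf.
have -> : (fun x => (f x)^-1) = fun x => if f x == 0 then 0 else (f x)^-1.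
  by apply/funext => x; case: eqP => // ->; rewrite invr0.
apply: measurable_fun_if => //.
- by apply: measurable_fun_eqr => //; exact: measurable_cst.
- apply: (@measurable_comp _ _ _ _ _ _ [set r : R | r != 0]).
  + exact: open_measurable.
  + by move=> _ [x [_ /= /negbT fx0] <-].
  + apply: open_continuous_measurable_fun => //; apply/in_setP => x /= x0.
    exact: inv_continuous.
  + by apply: measurable_funS mf => // x [].
Qed.

Lemma measurable_tau (R : realType) (yx Ux Hx r : R -> R) :
  measurable_fun setT yx -> measurable_fun setT Ux ->
  measurable_fun setT Hx -> measurable_fun setT r ->
  measurable_fun setT (tau yx Ux Hx r).
Proof.
move=> my mU mH mr.
apply: measurable_fun_ifT; first exact: measurable_fun_eqr.
  exact: measurable_cst.
apply: measurable_fun_ifT.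
- apply: measurable_and; first exact: measurable_fun_eqr.
  exact: measurable_fun_ltr.
- apply/measurable_EFinP; apply: measurable_funM; first exact: measurable_funM.
  exact: measurable_funV.
- exact: measurable_cst.
Qed.

Lemma measure_le_scaled_integral {d} {T : measurableType d} {R : realType}
    {nu : {measure set T -> \bar R}} {A : set T} {g : T -> R} {k : R} :
  measurable A -> measurable_fun A g -> 0 <= k ->
  (forall x, A x -> 0 <= g x) -> {ae nu, forall x, A x -> 1 <= k * g x} ->
  (nu A <= k%:E * \int[nu]_(x in A) (g x)%:E)%E.
Proof.
move=> mA mg k_ge0 g_ge0 kg1.
have mgE : measurable_fun A (EFin \o g) by exact/measurable_EFinP.
have gE_ge0 x : A x -> (0 <= (g x)%:E)%E by rewrite lee_fin => /g_ge0.
rewrite -[nu A]mul1e -integral_cst // -ge0_integralZl_EFin //.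
apply: ae_ge0_le_integral => //.
- by move=> x /g_ge0 gx; rewrite lee_fin mulr_ge0.
- by apply/measurable_EFinP; exact: measurable_funM.
Qed.

Lemma nondecreasing_cvgNy_le {R : realType} {f : R -> R} {l : R} :
  {homo f : a b / a <= b} -> f x @[x --> -oo] --> l -> forall x, l <= f x.
Proof.
move=> f_nd fl x; rewrite -(cvg_lim _ fl) //.
apply: limr_le; first exact: cvgP fl.
by apply: filterS (nbhs_ninfty_le (num_real x)) => z; exact: f_nd.
Qed.

Section lebesgue_measure_on_line.
Context {R : realType}.
Local Notation mu := (@lebesgue_measure R).

(* Instance inference does not always find the [Filter] structure of
   [almost_everywhere mu] on the Lebesgue sigma-algebra, hence the explicit
   [(F := almost_everywhere mu)] below. *)
Lemma ae_tau_le_bound {yx Ux Hx r : R -> R} {c : R} (t : R) : 0 < c ->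
  {ae mu, forall xi, c <= yx xi + Hx xi} ->
  {ae mu, forall xi, 0 <= yx xi} -> {ae mu, forall xi, 0 <= Hx xi} ->
  {ae mu, forall xi, yx xi * Hx xi = Ux xi ^+ 2 + r xi ^+ 2} ->
  {ae mu, forall xi, (tau yx Ux Hx r xi <= t%:E)%E ->
                     1 <= (1 + t ^+ 2 / 4) / c * Hx xi}.
Proof.
move=> c_gt0 c_le y_ge0 Hx_ge0 yH.
have bound : {ae mu, forall xi, (tau yx Ux Hx r xi <= t%:E)%E ->
                                yx xi + Hx xi <= (1 + t ^+ 2 / 4) * Hx xi}.
  move: y_ge0 Hx_ge0 yH; apply: (filterS3 (F := almost_everywhere mu)) => xi.
  exact: tau_le_bound.
move: c_le bound; apply: (filterS2 (F := almost_everywhere mu)).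
move=> xi c_le_xi bound_xi /bound_xi yH_le.
by rewrite mulrAC ler_pdivlMr // mul1r (le_trans c_le_xi).
Qed.

Lemma measure_le_from_centered_itvs (A : set R) (M : \bar R) : measurable A ->
  (forall n : nat, mu (A `&` `[(- n%:R)%R, n%:R%R]) <= M)%E -> (mu A <= M)%E.
Proof.
move=> mA AnM; set F := fun n : nat => A `&` `[- n%:R, n%:R]%classic.
have mF n : measurable (F n) by apply: measurableI => //; exact: measurable_itv.
have FA : \bigcup_n F n = A.
  apply/seteqP; split => [x [n _ []] // | x Ax].
  exists (Num.truncn `|x|).+1 => //; split => //=.
  by rewrite in_itv /= -ler_norml ltW // truncnS_gt.
have F_nd : nondecreasing_seq F.
  move=> n m nm; apply/subsetPset => x [Ax].
  rewrite /= !in_itv /= => /andP[xn nx].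
  have : (n%:R : R) <= m%:R by rewrite ler_nat.
  by split => //; rewrite /= in_itv /=; apply/andP; split; lra.
have := nondecreasing_cvg_mu (mu := mu) mF
  (bigcup_measurable (fun n _ => mF n)) F_nd.
rewrite FA => cvg_muA; rewrite -(cvg_lim _ cvg_muA) //.
by apply: lime_le; [exact: cvgP cvg_muA | exact: nearW].
Qed.

Lemma nondecreasing_le_Lnorm_infty {f : R -> R} : {homo f : a b / a <= b} ->
  forall x, ((f x)%:E <= 'N[mu]_(+oo)[EFin \o f])%E.
Proof.
move=> f_nd x.
have muT : (0 < mu [set: R])%E.
  by rewrite -set_itvNyy lebesgue_measure_itv /= ltry.
rewrite unlock /= muT leNgt; apply/negP => supf_lt_fx.
have [N [mN muN0 fN]] := ess_sup_ge mu (abse \o (EFin \o f)).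
suff : (mu `[x, +oo[ <= 0)%E by rewrite lebesgue_measure_itv /= ltry.
rewrite -muN0; apply: (le_measure mu (mem_set (measurable_itv _)) (mem_set mN)).
move=> z; rewrite /= in_itv /= andbT => xz.
apply: fN; apply/negP; rewrite -ltNge /=; apply: (lt_le_trans supf_lt_fx).
by rewrite lee_fin (le_trans (f_nd _ _ xz)) // ler_norm.
Qed.

Section weak_derivative.
Context {f g : R -> R}.
Hypotheses (fg : weak_deriv f g) (g_ge0 : {ae mu, forall x, 0 <= g x}).

Lemma weak_deriv_measurable {a b : R} : a <= b -> measurable_fun `[a, b] g.
Proof. by move=> /fg [/measurable_int/measurable_EFinP]. Qed.

(* [Num.max (g x) 0] agrees with [g] a.e. and is nonnegative everywhere, as
   the integration lemmas for nonnegative functions require. *)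
Lemma weak_deriv_integral_maxr0 {a b : R} : a <= b ->
  (\int[mu]_(x in `[a, b]) (Num.max (g x) 0)%:E = (f b - f a)%:E)%E.
Proof.
move=> ab; have [_ ->] := fg _ _ ab.
have mg := weak_deriv_measurable ab.
apply: ae_eq_integral => //.
- by apply/measurable_EFinP; apply: measurable_maxr.
- exact/measurable_EFinP.
- apply: (filterS (F := almost_everywhere mu)) g_ge0 => x gx0 _ /=.
  by rewrite max_l.
Qed.

Lemma weak_deriv_nondecreasing : {homo f : a b / a <= b}.
Proof.
move=> a b ab; rewrite -subr_ge0 -lee_fin -(weak_deriv_integral_maxr0 ab).
by apply: integral_ge0 => x _; rewrite lee_fin le_max lexx orbT.
Qed.

Lemma weak_deriv_measure_le {A : set R} {k a b : R} :
  measurable A -> a <= b -> 0 <= k -> {ae mu, forall x, A x -> 1 <= k * g x} ->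
  (mu (A `&` `[a, b]) <= (k * (f b - f a))%:E)%E.
Proof.
move=> mA ab k_ge0 kg1; set gp := fun x => Num.max (g x) 0.
have gp_ge0 x : 0 <= gp x by rewrite le_max lexx orbT.
have mgp : measurable_fun `[a, b] gp.
  apply: measurable_maxr; first exact: weak_deriv_measurable.
  exact: measurable_cst.
have mI : measurable `[a, b]%classic by exact: measurable_itv.
have mAI : measurable (A `&` `[a, b]) by exact: measurableI.
have kgp1 : {ae mu, forall x, (A `&` `[a, b]) x -> 1 <= k * gp x}.
  apply: (filterS (F := almost_everywhere mu)) kg1 => x kgx [/kgx kgx1 _].
  by rewrite (le_trans kgx1) // ler_wpM2l // le_max lexx.
have mgpAI : measurable_fun (A `&` `[a, b]) gp by exact: measurable_funS mgp.
apply: (le_trans (measure_le_scaled_integral (nu := mu) mAI mgpAI k_ge0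
  (fun x _ => gp_ge0 x) kgp1)).
rewrite EFinM lee_wpmul2l ?lee_fin // -(weak_deriv_integral_maxr0 ab).
apply: ge0_subset_integral => //; first exact/measurable_EFinP.
by move=> x _; rewrite lee_fin.
Qed.

End weak_derivative.
End lebesgue_measure_on_line.

Theorem corollary2p4 (R : realType) (alpha alphax : R -> R)
    (y0 U0 H0 r0 y0x U0x H0x : R -> R) (c t : R) :
  W1inf alpha alphax ->
  ((forall x, 0 <= alpha x < 1) \/ (forall x, alpha x = 1)) ->
  in_Fi alpha y0 U0 H0 r0 y0x U0x H0x ->
  0 < c ->
  {ae (@lebesgue_measure R), forall xi, c <= y0x xi + H0x xi} ->
  0 <= t ->
  (@lebesgue_measure R [set xi | (tau y0x U0x H0x r0 xi <= t%:E)%E]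
     <= ((1 + t ^+ 2 / 4) / c)%:E
        * 'N[@lebesgue_measure R]_(+oo%E)[EFin \o H0])%E.
Proof.
move=> _ _ [[[_ [_ [my1 _]]] [_ [_ [mU _]]] [[_ [wdH [mH _]]] H_cvg] [mr _] _]
  [_ [[y_ge0 Hx_ge0 _] [yH _]]]] c_gt0 c_le _.
set K := (1 + t ^+ 2 / 4) / c.
have K_ge0 : 0 <= K by rewrite divr_ge0 ?addr_ge0 ?divr_ge0 ?sqr_ge0 ?ltW.
have my : measurable_fun setT y0x.
  rewrite (_ : y0x = fun x => (y0x x - 1) + 1); first exact: measurable_funD.
  by apply/funext => x; rewrite subrK.
have H_nd := weak_deriv_nondecreasing wdH Hx_ge0.
have H_ge0 := nondecreasing_cvgNy_le H_nd H_cvg.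
have mS : measurable [set xi | (tau y0x U0x H0x r0 xi <= t%:E)%E].
  rewrite -[X in measurable X]setTI; apply: emeasurable_fun_infty_c => //.
  exact: measurable_tau.
have bound := ae_tau_le_bound t c_gt0 c_le y_ge0 Hx_ge0 yH.
apply: measure_le_from_centered_itvs => // n.
have n_ge : - (n%:R : R) <= n%:R by have := ler0n R n; lra.
apply: (le_trans (weak_deriv_measure_le wdH Hx_ge0 mS n_ge K_ge0 bound)).
rewrite EFinM lee_wpmul2l ?lee_fin //.
apply: le_trans (nondecreasing_le_Lnorm_infty H_nd n%:R).
by rewrite lee_fin lerBlDr lerDl.
Qed.
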